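(* Let $\mathcal{X}$ be countable and $\mathcal{H}\subseteq\{0,1\}^{\mathcal{X}}$ a class with $\mathtt{RepDim}(\mathcal{H})<\infty$. Then $\mathtt{CD}^\star(\mathcal{H})<\infty$.
   Context: A dataset of size $m$ is $S=((x_1,y_1),\dots,(x_m,y_m))\in(\mathcal{X}\times\{0,1\})^m$; it is $\mathcal{H}$-realizable if some $h\in\mathcal{H}$ satisfies $h(x_i)=y_i$ for all $i$. $G_m(\mathcal{H})$ is the graph on realizable datasets of size $m$ with $S,S'$ adjacent iff there is $x$ with $(x,0)$ appearing in $S$ and $(x,1)$ appearing in $S'$. A fractional clique of a graph $G=(V,E)$ is $\delta:V\to[0,\infty)$ with $\sum_{v\in I}\delta(v)\le1$ for every independent set $I$; $\omega^\star_m$ is the supremum of $\sum_v\delta(v)$ over fractional cliques of $G_m(\mathcal{H})$; $\mathtt{CD}^\star(\mathcal{H})=\sup\{m:\omega^\star_m=2^m\}$. For a distribution $\mathcal{D}$ on $\mathcal{X}\times\{0,1\}$, $L_{\mathcal{D}}(h)=\Pr_{(x,y)\sim\mathcal{D}}[h(x)\neq y]$, and $\mathcal{D}$ is realizable if $\inf_{h\in\mathcal{H}}L_{\mathcal{D}}(h)=0$. The representation dimension $\mathtt{RepDim}(\mathcal{H})$ is $\ln k$, where $k$ is the minimal integer for which there is a probability distribution $\mathcal{P}$ over hypothesis classes $\mathcal{C}\subseteq\{0,1\}^{\mathcal{X}}$ of size $k$ such that for every realizable $\mathcal{D}$, $\Pr_{\mathcal{C}\sim\mathcal{P}}[\exists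 h\in\mathcal{C}: L_{\mathcal{D}}(h)\le 1/4]\ge 3/4$ (and $\infty$ if no such $k$ exists). *)

From HB Require Import structures.
From mathcomp Require Import all_boot all_order all_algebra.
From mathcomp Require Import all_classical all_reals all_analysis.
Set Implicit Arguments. Unset Strict Implicit. Unset Printing Implicit Defensive.
Import Order.TTheory GRing.Theory Num.Theory.
Local Open Scope classical_set_scope.
Local Open Scope ring_scope.
Local Open Scope ereal_scope.

Section Defs.
Variables (R : realType) (X : countType).

Definition dataset (m : nat) := m.-tuple (X * bool).

Definition realizable_ds (H : set (X -> bool)) m (S : dataset m) : Prop :=
  exists2 h, H h & forall i : 'I_m, h (tnth S i).1 = (tnth S i).2.

Definition conflict m (S S' : dataset m) : Prop :=
  exists x : X, ((x, false) \in S) /\ ((x, true) \in S').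

Definition adjacent m (S S' : dataset m) : Prop := conflict S S' \/ conflict S' S.

Definition independent (H : set (X -> bool)) m (I : set (dataset m)) : Prop :=
  I `<=` realizable_ds H (m:=m) /\
  forall S S', I S -> I S' -> ~ adjacent S S'.

Definition fractional_clique (H : set (X -> bool)) m (delta : dataset m -> R) : Prop :=
  (forall S, realizable_ds H S -> (0 <= delta S)%R) /\
  forall I, independent H I -> \esum_(S in I) (delta S)%:E <= 1.

Definition omega_star (H : set (X -> bool)) (m : nat) : \bar R :=
  ereal_sup [set \esum_(S in realizable_ds H (m:=m)) (delta S)%:E
            | delta in fractional_clique H (m:=m)].

(* CD*(H) < oo : the set {m | omega*_m = 2^m} is bounded above *)
Definition CDstar_finite (H : set (X -> bool)) : Prop :=
  exists N : nat, forall m : nat, omega_star H m = ((2%:R : R) ^+ m)%:E -> (m <= N)%N.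

(* Since X is countable, a (discrete) probability distribution on X x {0,1}
   is given by its probability mass function. *)
Definition pmf (p : X * bool -> R) : Prop :=
  (forall z, (0 <= p z)%R) /\ \esum_(z in [set: X * bool]) (p z)%:E = 1.

Definition loss (p : X * bool -> R) (h : X -> bool) : \bar R :=
  \esum_(z in [set z : X * bool | h z.1 != z.2]) (p z)%:E.

Definition realizable_distr (H : set (X -> bool)) (p : X * bool -> R) : Prop :=
  pmf p /\ ereal_inf [set loss p h | h in H] = 0.

(* There is k and a probability distribution over hypothesis classes of size
   (at most) k -- modelled as a random k-indexed family of hypotheses on an
   arbitrary probability space -- such that for every realizable D, with
   (inner) probability >= 3/4 the class contains h with L_D(h) <= 1/4. *)
Definition RepDim_finite (H : set (X -> bool)) : Prop :=
  exists (k : nat) (d : measure_display) (Omega : measurableType d)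
         (P : probability Omega R) (C : Omega -> 'I_k -> (X -> bool)),
    forall p, realizable_distr H p ->
      exists A : set Omega,
        [/\ measurable A,
            A `<=` [set w | exists i : 'I_k, loss p (C w i) <= (1/4)%:E]
          & (3/4)%:E <= P A].

End Defs.

From Pilot Require Import Defs.
From mathcomp Require Import all_boot all_order all_algebra.
From mathcomp Require Import all_classical all_reals all_analysis.
From mathcomp Require Import measurable_realfun lebesgue_integral.
From mathcomp Require Import ring lra zify.
Set Implicit Arguments. Unset Strict Implicit. Unset Printing Implicit Defensive.
Import Order.TTheory GRing.Theory Num.Theory.
Local Open Scope classical_set_scope.
Local Open Scope ring_scope.

(* Fix m, a fractional clique delta of G_m(H), and a hypothesis h.  Weight a
   dataset S by qweight h S = (1/4)^(#mistakes of h on S) * (3/4)^(#others).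
   Flipping h independently at every point with probability 1/4 yields a
   random hypothesis g, and for realizable S, qweight h S is at most the
   probability that g is consistent with S.  The datasets consistent with a
   fixed g form an independent set, so  sum_S delta S * qweight h S <= 1.

   Conversely, for realizable S the empirical distribution of S is
   realizable, so with probability >= 3/4 the random class C of size k
   contains a hypothesis with at most m/4 mistakes on S, whose qweight is at
   least 3^(m - m/4) / 4^m.  Averaging over C gives
   omega*_m <= 4/3 * k * 4^m / 3^(m - m/4),  which is < 2^m once m > 7 k^4. *)

Lemma sum_count_mem (T : eqType) (Z S : seq T) (e : pred T) : uniq Z ->
  (forall z, z \in Z -> e z) -> (forall z, z \in S -> e z -> z \in Z) ->
  (\sum_(z <- Z) count_mem z S = count e S)%N.
Proof.
move=> uZ ZE; elim: S => [|x S IH] SZ /=; first by rewrite big1.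
rewrite big_split /= IH; last by move=> z zS; apply: SZ; rewrite inE zS orbT.
congr (_ + _).
have -> : (\sum_(z <- Z) (x == z) = count_mem x Z)%N.
  rewrite -sum1_count [RHS]big_mkcond /=; apply: eq_bigr => z _.
  by rewrite eq_sym; case: (_ == _).
rewrite count_uniq_mem //.
suff -> : (x \in Z) = e x by [].
case: (boolP (e x)) => ex; first by rewrite SZ // inE eqxx.
by apply/negbTE; apply: contra ex; exact: ZE.
Qed.

Section ExtendedSums.
Variable R : realType.

Lemma esum_le_seq (T : choiceType) (D : set T) (f : T -> R) (B : R) :
  (forall r, uniq r -> (forall x, x \in r -> D x) -> \sum_(x <- r) f x <= B) ->
  (\esum_(x in D) (f x)%:E <= B%:E)%E.
Proof.
move=> H; apply: ge_ereal_sup => _ [F [finF FD] <-].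
rewrite fsbig_finite //= sumEFin lee_fin; apply: H; first exact: finmap.fset_uniq.
by move=> x; rewrite in_fset_set // => /set_mem; exact: FD.
Qed.

Lemma esum_ge_seq (T : choiceType) (D : set T) (f : T -> R) (r : seq T) :
  uniq r -> (forall x, x \in r -> D x) -> (forall x, x \in r -> 0 <= f x) ->
  ((\sum_(x <- r) f x)%:E <= \esum_(x in D) (f x)%:E)%E.
Proof.
move=> ur rD f0; apply: esum_ge; exists [set` r].
  by split; [exact: finite_seq | move=> x /= xr; exact: rD].
by rewrite -fsbig_seq // sumEFin.
Qed.

Lemma sum_measure_le (d : measure_display) (T : measurableType d)
  (P : probability T R) (I : Type) (s : seq I) (c : I -> R) (A : I -> set T)
  (K : R) : (forall i, 0 <= c i) -> (forall i, measurable (A i)) ->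
  (forall w, \sum_(i <- s) c i * \1_(A i) w <= K) ->
  (\sum_(i <- s) (c i)%:E * P (A i) <= K%:E)%E.
Proof.
move=> c0 mA HK.
have mind i : measurable_fun (setT : set T) (fun x : T => ((\1_(A i) x)%:E : \bar R)).
  by apply/measurable_EFinP; exact: measurable_indic.
have mf i : measurable_fun (setT : set T) (fun x : T => ((c i)%:E * (\1_(A i) x)%:E)%E).
  exact: measurable_funeM.
have f0 i x : setT x -> (0 <= (c i)%:E * (\1_(A i) x)%:E)%E.
  by move=> _; rewrite mule_ge0 // lee_fin.
have -> : (\sum_(i <- s) (c i)%:E * P (A i) =
    \sum_(i <- s) \int[P]_(x in setT) ((c i)%:E * (\1_(A i) x)%:E))%E.
  apply: eq_bigr => i _.
  rewrite (ge0_integralZl P measurableT (mind i)) ?lee_fin //.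
  by rewrite integral_indic // setIT.
rewrite -(@ge0_integral_sum _ _ _ P setT measurableT _ _ mf f0).
apply: (@le_trans _ _ (\int[P]_(x in setT) (cst K%:E) x)%E).
  apply: ge0_le_integral => //.
  - by move=> x _; apply: sume_ge0 => i _; exact: f0.
  - exact: emeasurable_sum.
  - move=> x _ /=; rewrite (eq_bigr (fun i => (c i * \1_(A i) x)%:E)).
      by rewrite sumEFin lee_fin.
    by move=> i _; rewrite EFinM.
rewrite integral_cst // [X in (_ * X)%E](_ : _ = 1%E) ?mule1 //.
exact: probability_setT.
Qed.

End ExtendedSums.

Lemma pow_16_27 n : (n.+1 * 16 ^ n <= 2 * 27 ^ n)%N.
Proof.
elim: n => [|n IH] //; case: n IH => [|n] IH //.
rewrite (expnS 16 n.+1) (expnS 27 n.+1).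
set A := (16 ^ n.+1)%N in IH *; set B := (27 ^ n.+1)%N in IH *.
have h1 : (27 * (n.+2 * A) <= 27 * (2 * B))%N by rewrite leq_mul2l IH orbT.
have h2 : (n.+2 * (16 * A) <= 27 * (n.+2 * A))%N.
  by rewrite mulnCA leq_mul2r; apply/orP; right; lia.
nia.
Qed.

(* 4 k 2^m < 3^(m - m/4 + 1) once m > 7 k^4: raise both sides to the fourth
   power and compare 256 k^4 16^m with 81 * 27^m. *)
Lemma exp_gap k m : (7 * k ^ 4 < m)%N -> (4 * k * 2 ^ m < 3 ^ (m - m %/ 4 + 1))%N.
Proof.
move=> hm; rewrite -(@ltn_exp2r _ _ 4) //.
set a := (m - m %/ 4)%N.
have ha : (3 * m + 4 <= (a + 1) * 4)%N by have := leq_divM m 4; rewrite /a; lia.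
apply: (@leq_trans (3 ^ (3 * m + 4))); last by rewrite -expnM leq_pexp2l.
have -> : (3 ^ (3 * m + 4) = 81 * 27 ^ m)%N by rewrite expnD expnM mulnC.
have -> : ((4 * k * 2 ^ m) ^ 4 = 256 * k ^ 4 * 16 ^ m)%N.
  by rewrite !expnMn -expnM (mulnC m 4) expnM.
have := pow_16_27 m; have : (0 < 16 ^ m)%N by rewrite expn_gt0.
set X := (16 ^ m)%N; set Y := (27 ^ m)%N; set K := (k ^ 4)%N in hm * => X0 h.
have : (512 * K * X < 81 * m.+1 * X)%N by rewrite ltn_pmul2r //; lia.
lia.
Qed.

(* 4^m / 3^(m - m/4): the inverse of the least qweight of a dataset on which
   a hypothesis makes at most m/4 mistakes. *)
Definition qbound (R : realType) (m : nat) : R := (4 ^ m)%:R / (3 ^ (m - m %/ 4))%:R.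

Lemma qbound_ge0 (R : realType) m : 0 <= qbound R m.
Proof. by rewrite divr_ge0 // ler0n. Qed.

Lemma clique_bound_lt_pow2 (R : realType) (k m : nat) : (7 * k ^ 4 < m)%N ->
  4/3 * (k%:R * qbound R m) < (2 ^ m)%:R.
Proof.
move=> /exp_gap; rewrite /qbound; set a := (m - m %/ 4)%N => gap.
have -> : 4/3 * (k%:R * ((4 ^ m)%:R / (3 ^ a)%:R)) =
    (4 * k * 4 ^ m)%:R / (3 ^ (a + 1))%:R :> R.
  by rewrite !natrM expnD expn1 natrM; field; rewrite pnatr_eq0 expn_eq0.
rewrite ltr_pdivrMr ?ltr0n ?expn_gt0 // -natrM ltr_nat.
have -> : (4 ^ m = 2 ^ m * 2 ^ m)%N by rewrite -expnMn.
have : (0 < 2 ^ m)%N by rewrite expn_gt0.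
nia.
Qed.

Section FlipArgument.
Variables (R : realType) (X : countType) (H : set (X -> bool)) (m : nat).

(* The biased coin: it shows true (a flip / a mistake) with probability 1/4. *)
Definition coin (b : bool) : R := if b then 1/4 else 3/4.

Lemma coin_ge0 b : 0 <= coin b. Proof. by case: b; rewrite /coin; lra. Qed.
Lemma coin_le1 b : coin b <= 1. Proof. by case: b; rewrite /coin; lra. Qed.
Lemma coin_sum : coin true + coin false = 1. Proof. by rewrite /coin; lra. Qed.

Definition mistake (h : X -> bool) (z : X * bool) : bool := h z.1 != z.2.

Definition qweight (h : X -> bool) (S : dataset X m) : R :=
  \prod_(z <- S) coin (mistake h z).

Definition consistent (g : X -> bool) (S : dataset X m) : bool :=
  all (fun z => g z.1 == z.2) S.

Lemma qweight_ge0 h S : 0 <= qweight h S.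
Proof. by apply: prodr_ge0 => z _; exact: coin_ge0. Qed.

Lemma realizable_seq (S : dataset X m) : realizable_ds H S ->
  exists2 h', H h' & forall z, z \in S -> h' z.1 = z.2.
Proof. by move=> [h' Hh' hS]; exists h' => // z /tnthP [i ->]; exact: hS. Qed.

Lemma consistent_independent (g : X -> bool) (I : set (dataset X m)) :
  I `<=` realizable_ds H (m:=m) -> (forall S, I S -> consistent g S) -> independent H I.
Proof.
move=> IH Ig; split => // S S' /Ig /allP cS /Ig /allP cS'.
move=> [] [x [xS xS']].
  by move: (cS _ xS) (cS' _ xS') => /= /eqP -> /eqP.
by move: (cS' _ xS) (cS _ xS') => /= /eqP -> /eqP.
Qed.

Lemma clique_consistent_le1 (delta : dataset X m -> R)
  (clique : fractional_clique H delta) (s : seq (dataset X m)) :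
  uniq s -> (forall S, S \in s -> realizable_ds H S) -> forall g : X -> bool,
  \sum_(S <- s | consistent g S) delta S <= 1.
Proof.
move=> us rs g; rewrite -big_filter -lee_fin.
set t := [seq S <- s | consistent g S].
have ts S : S \in t -> S \in s by rewrite mem_filter => /andP[].
have t_uniq : uniq t by exact: filter_uniq.
have d0 S : S \in t -> 0 <= delta S by move=> /ts /rs; exact: clique.1.
apply: le_trans (esum_ge_seq (D := [set S | S \in t]) t_uniq (fun _ St => St) d0) _.
apply: clique.2; apply: (consistent_independent (g := g)) => S /=.
  by move/ts; exact: rs.
by rewrite mem_filter => /andP[].
Qed.

Definition flip (Y : seq X) (h : X -> bool) (f : {ffun seq_sub Y -> bool})
  (x : X) : bool :=
  if (insub x : option (seq_sub Y)) is Some y then h x (+) f y else h x.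

Lemma flip_in (Y : seq X) h (f : {ffun seq_sub Y -> bool}) (y : seq_sub Y) :
  flip h f (val y) = h (val y) (+) f y.
Proof. by rewrite /flip valK. Qed.

Definition flip_prob (Y : seq X) (f : {ffun seq_sub Y -> bool}) : R :=
  \prod_y coin (f y).

Lemma flip_prob_sum (Y : seq X) : \sum_(f : {ffun seq_sub Y -> bool}) flip_prob f = 1.
Proof.
transitivity (\prod_(y : seq_sub Y) \sum_(b : bool) coin b).
  by rewrite bigA_distr_bigA.
by rewrite big1 // => y _; rewrite big_bool /= coin_sum.
Qed.

Definition flip_ok (Y : seq X) (h : X -> bool) (S : dataset X m) (y : seq_sub Y)
  (b : bool) : bool := all (fun z => (z.1 == val y) ==> (h z.1 (+) b == z.2)) S.

Definition flip_factor (Y : seq X) (h : X -> bool) (S : dataset X m)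
  (y : seq_sub Y) (b : bool) : R := if flip_ok h S y b then coin b else 0.

Lemma flip_factor_prod (Y : seq X) (h : X -> bool) (S : dataset X m)
  (SY : forall z, z \in S -> z.1 \in Y) (f : {ffun seq_sub Y -> bool}) :
  \prod_y flip_factor h S y (f y) = flip_prob f * (consistent (flip h f) S)%:R.
Proof.
have [c|nc] := boolP (consistent (flip h f) S).
  rewrite mulr1; apply: eq_bigr => y _; rewrite /flip_factor.
  suff -> : flip_ok h S y (f y) by [].
  apply/allP => z zS; apply/implyP => /eqP z1.
  by move/allP: c => /(_ z zS) /eqP <-; rewrite z1 flip_in.
rewrite mulr0; move: nc => /allPn [z zS nz].
pose y : seq_sub Y := SeqSub (SY z zS).
rewrite (bigD1 y) //= /flip_factor.
suff -> : flip_ok h S y (f y) = false by rewrite mul0r.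
apply/negbTE/allPn; exists z => //; rewrite eqxx /=.
by rewrite -[z.1]/(val y) -flip_in.
Qed.

(* Per point y: on a realizable S all samples at y carry the same label, so
   the mistakes of h at y cost at most the chance of a good flip at y. *)
Lemma coin_prod_le_flip (Y : seq X) (h h' : X -> bool) (S : dataset X m)
  (hS : forall z, z \in S -> h' z.1 = z.2) (y : seq_sub Y) :
  \prod_(z <- S | val y == z.1) coin (mistake h z) <= \sum_b flip_factor h S y b.
Proof.
rewrite big_bool /=.
have [/hasP [z0 z0S /eqP y0]|nhy] := boolP (has (fun z => val y == z.1) S).
  rewrite (big_rem z0) //= y0 eqxx.
  apply: (@le_trans _ _ (coin (mistake h z0))).
    rewrite -[X in _ <= X]mulr1; apply: ler_wpM2l; first exact: coin_ge0.
    by apply: prodr_ile1 => z _; rewrite coin_ge0 coin_le1.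
  have ok : flip_ok h S y (mistake h z0).
    apply/allP => z zS; apply/implyP => /eqP z1.
    have e1 : z.1 = z0.1 by rewrite z1 y0.
    have e2 : z.2 = z0.2 by rewrite -(hS z zS) -(hS z0 z0S) e1.
    by rewrite e1 e2 /mistake; case: (h z0.1); case: (z0.2).
  rewrite /flip_factor; case: (mistake h z0) ok => ->.
    by rewrite lerDl; case: ifP => _ //; exact: coin_ge0.
  by rewrite lerDr; case: ifP => _ //; exact: coin_ge0.
rewrite big_hasC // /flip_factor.
have ok b : flip_ok h S y b.
  apply/allP => z zS; apply/implyP => /eqP z1.
  by move/hasPn: nhy => /(_ z zS); rewrite z1 eqxx.
by rewrite !ok coin_sum.
Qed.

Lemma qweight_le_consistent_prob (Y : seq X) (h h' : X -> bool) (S : dataset X m)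
  (hS : forall z, z \in S -> h' z.1 = z.2) (SY : forall z, z \in S -> z.1 \in Y) :
  qweight h S <= \sum_(f : {ffun seq_sub Y -> bool})
                   flip_prob f * (consistent (flip h f) S)%:R.
Proof.
under eq_bigr do rewrite -(flip_factor_prod h SY).
rewrite -bigA_distr_bigA /= /qweight.
have -> : \prod_(z <- S) coin (mistake h z) =
    \prod_(z <- S) \prod_(y : seq_sub Y | val y == z.1) coin (mistake h z).
  apply: eq_big_seq => z zS.
  by rewrite (big_pred1 (SeqSub (SY z zS))) // => y /=.
rewrite (exchange_big_dep predT) //=.
apply: ler_prod => y _; rewrite prodr_ge0 => [|z _]; last exact: coin_ge0.
exact: coin_prod_le_flip hS y.
Qed.

(* The key bound: for every hypothesis h, sum_S delta S * qweight h S <= 1,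
   obtained by averaging clique_consistent_le1 over the random flips of h. *)
Lemma clique_qweight_le1 (delta : dataset X m -> R)
  (clique : fractional_clique H delta) (s : seq (dataset X m)) :
  uniq s -> (forall S, S \in s -> realizable_ds H S) -> forall h : X -> bool,
  \sum_(S <- s) delta S * qweight h S <= 1.
Proof.
move=> us rs h.
set Y := [seq z.1 | z <- flatten [seq tval t | t <- s]].
have SY S : S \in s -> forall z, z \in S -> z.1 \in Y.
  move=> Ss z zS; apply/mapP; exists z => //; apply/flattenP.
  by exists (tval S) => //; apply/mapP; exists S.
have d0 S : S \in s -> 0 <= delta S by move/rs; exact: clique.1.
apply: (@le_trans _ _ (\sum_(S <- s) delta S *
    \sum_(f : {ffun seq_sub Y -> bool}) flip_prob f * (consistent (flip h f) S)%:R)).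
  rewrite !big_seq; apply: ler_sum => S Ss; rewrite ler_wpM2l ?d0 //.
  have [h' _ hS] := realizable_seq (rs S Ss).
  exact: qweight_le_consistent_prob hS (SY S Ss).
under eq_bigr do rewrite mulr_sumr.
rewrite exchange_big /= -[X in _ <= X](flip_prob_sum Y); apply: ler_sum => f _.
have -> : \sum_(S <- s) delta S * (flip_prob f * (consistent (flip h f) S)%:R) =
    flip_prob f * \sum_(S <- s | consistent (flip h f) S) delta S.
  rewrite mulr_sumr [in RHS]big_mkcond /=; apply: eq_bigr => S _.
  by case: (consistent _ _); rewrite ?mulr1 ?mulr0 // mulrC.
rewrite -[X in _ <= X]mulr1; apply: ler_wpM2l.
  by apply: prodr_ge0 => y _; exact: coin_ge0.
exact: clique_consistent_le1.
Qed.

Lemma qweight_few_mistakes (h : X -> bool) (S : dataset X m) :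
  (4 * count (mistake h) S <= m)%N -> 1 <= qbound R m * qweight h S.
Proof.
set E := count (mistake h) S; set G := count (predC (mistake h)) S => hE.
have hEG : (E + G = m)%N by rewrite /E /G count_predC size_tuple.
have -> : qweight h S = (1/4) ^+ E * (3/4) ^+ G.
  rewrite /qweight (bigID (mistake h)) /=.
  rewrite (eq_bigr (fun=> 1/4)); last by move=> z ->.
  rewrite [X in _ * X](eq_bigr (fun=> 3/4)); last by move=> z /negbTE ->.
  by rewrite !big_const_seq !iter_mulr_1.
rewrite /qbound mulrAC ler_pdivlMr ?ltr0n ?expn_gt0 // mul1r.
have -> : ((4 ^ m)%:R : R) = 4%:R ^+ E * 4%:R ^+ G by rewrite -exprD hEG natrX.
rewrite mulrACA -!exprMn.
have -> : 4 / 4 = 1 :> R by lra.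
have -> : 4 * (3 / 4) = 3 :> R by lra.
rewrite mul1r expr1n mul1r -natrX ler_nat leq_pexp2l //.
have : (E <= m %/ 4)%N by rewrite leq_divRL // mulnC.
lia.
Qed.

End FlipArgument.

Section Representation.
Variables (R : realType) (X : countType) (H : set (X -> bool)) (m : nat).

Definition empirical (S : dataset X m) (z : X * bool) : R :=
  (count_mem z S)%:R / m%:R.

Lemma empirical_ge0 S z : 0 <= empirical S z.
Proof. by rewrite divr_ge0 // ler0n. Qed.

Lemma empirical_sum (S : dataset X m) (Z : seq (X * bool)) (e : pred (X * bool)) :
  uniq Z -> (forall z, z \in Z -> e z) -> (forall z, z \in S -> e z -> z \in Z) ->
  \sum_(z <- Z) empirical S z = (count e S)%:R / m%:R.
Proof.
move=> uZ ZE SZ; rewrite /empirical -mulr_suml -natr_sum.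
by rewrite (sum_count_mem uZ ZE SZ).
Qed.

Lemma empirical_loss (S : dataset X m) (g : X -> bool) :
  (((count (mistake g) S)%:R / m%:R)%:E <= loss (empirical S) g)%E.
Proof.
have uZ := undup_uniq [seq z <- S | mistake g z].
have inZ z : z \in undup [seq z <- S | mistake g z] -> mistake g z.
  by rewrite mem_undup mem_filter => /andP[].
rewrite /loss -(empirical_sum uZ inZ); last first.
  by move=> z zS ez; rewrite mem_undup mem_filter ez.
apply: esum_ge_seq => // z _; exact: empirical_ge0.
Qed.

Lemma empirical_pmf (S : dataset X m) : (0 < m)%N -> Defs.pmf (empirical S).
Proof.
move=> m_gt0; split; first exact: empirical_ge0.
set Z := undup (tval S); have uZ : uniq Z := undup_uniq _.
rewrite (eq_esum (b := fun z => if z \in [set` Z] then (empirical S z)%:E else 0%E)); last first.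
  move=> z _; case: ifPn => // /negP zZ.
  rewrite /empirical; suff -> : count_mem z S = 0%N by rewrite mul0r.
  by apply/count_memPn; apply/negP => zS; apply: zZ; rewrite in_setE /= mem_undup.
rewrite -esum_mkcond esum_fset; last 2 first.
- exact: finite_seq.
- by move=> z _; rewrite lee_fin; exact: empirical_ge0.
rewrite -fsbig_seq // sumEFin (@empirical_sum S Z predT uZ) //; last first.
  by move=> z zS _; rewrite mem_undup.
by rewrite count_predT size_tuple divff // pnatr_eq0 -lt0n.
Qed.

Lemma empirical_realizable (S : dataset X m) : (0 < m)%N -> realizable_ds H S ->
  realizable_distr H (empirical S).
Proof.
move=> m_gt0 rS; split; first exact: empirical_pmf.
have [h' Hh' hS] := realizable_seq rS.
apply/eqP; rewrite eq_le; apply/andP; split.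
  apply: ereal_inf_lbound; exists h' => //.
  rewrite /loss esum1 // => z /= nz.
  rewrite /empirical; suff -> : count_mem z S = 0%N by rewrite mul0r.
  by apply/count_memPn; apply/negP => zS; move: nz; rewrite (hS z zS) eqxx.
apply: le_ereal_inf_tmp => _ [h _ <-].
by apply: esum_ge0 => z _; rewrite lee_fin; exact: empirical_ge0.
Qed.

Variables (k : nat) (d : measure_display) (Omega : measurableType d).
Variables (P : probability Omega R) (C : Omega -> 'I_k -> X -> bool).
Hypothesis represents : forall p : X * bool -> R, realizable_distr H p ->
  exists A : set Omega,
    [/\ measurable A, A `<=` [set w | exists i : 'I_k, (loss p (C w i) <= (1/4)%:E)%E]
      & ((3/4)%:E <= P A)%E].

Definition good_for (S : dataset X m) (w : Omega) : Prop :=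
  exists i : 'I_k, (4 * count (mistake (C w i)) S <= m)%N.

(* Every realizable S has a measurable event of probability >= 3/4 on which
   the class is good for S (applying the representation to its empirical
   distribution). *)
Lemma good_events : (0 < m)%N -> exists A : dataset X m -> set Omega, forall S,
  measurable (A S) /\
  (realizable_ds H S -> A S `<=` good_for S /\ ((3/4)%:E <= P (A S))%E).
Proof.
move=> m_gt0.
suff /choice [A HA] : forall S, exists A : set Omega, measurable A /\
    (realizable_ds H S -> A `<=` good_for S /\ ((3/4)%:E <= P A)%E).
  by exists A.
move=> S; have [rS|nrS] := pselect (realizable_ds H S); last by exists set0; split=> // /nrS.
have [A [mA sA PA]] := represents (empirical_realizable m_gt0 rS).
exists A; split=> // _; split=> // w /sA [i li]; exists i.
have := le_trans (empirical_loss S (C w i)) li.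
rewrite lee_fin ler_pdivrMr ?ltr0n // => few.
by rewrite -(ler_nat R) natrM; lra.
Qed.

(* Pointwise in w: the clique mass of the datasets S for which w lies in a
   good event is at most k * qbound, since each good S has
   1 <= qbound * sum_i qweight (C w i) S and each qweight (C w i) has total
   clique mass at most 1. *)
Lemma good_mass_pointwise (delta : dataset X m -> R)
  (clique : fractional_clique H delta) (s : seq (dataset X m)) :
  uniq s -> (forall S, S \in s -> realizable_ds H S) ->
  forall A : dataset X m -> set Omega, (forall S, S \in s -> A S `<=` good_for S) ->
  forall w, \sum_(S <- s) delta S * \1_(A S) w <= k%:R * qbound R m.
Proof.
move=> us rs A good w.
apply: (@le_trans _ _ (\sum_(S <- s) delta S *
    (qbound R m * \sum_(i < k) qweight R (C w i) S))).
  rewrite !big_seq; apply: ler_sum => S Ss; apply: ler_wpM2l; first exact: clique.1 (rs S Ss).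
  rewrite indicE; case: (boolP (w \in A S)) => wA /=; last first.
    apply: mulr_ge0; first exact: qbound_ge0.
    by apply: sumr_ge0 => i _; exact: qweight_ge0.
  have [i few] := good S Ss w (set_mem wA).
  apply: le_trans (qweight_few_mistakes R few) _; rewrite ler_wpM2l ?qbound_ge0 //.
  by rewrite (bigD1 i) //= lerDl; apply: sumr_ge0 => j _; exact: qweight_ge0.
under eq_bigr do rewrite mulrCA mulr_sumr.
rewrite -mulr_sumr exchange_big /= mulrC; apply: ler_wpM2r; first exact: qbound_ge0.
apply: (@le_trans _ _ (\sum_(i < k) (1 : R))); last by rewrite sumr_const card_ord.
by apply: ler_sum => i _; exact: (clique_qweight_le1 clique us rs).
Qed.

(* Averaging the pointwise bound: each realizable S is counted with
   probability >= 3/4, so the total clique mass is <= 4/3 * k * qbound. *)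
Lemma clique_mass_le (delta : dataset X m -> R) :
  (0 < m)%N -> fractional_clique H delta ->
  (\esum_(S in realizable_ds H (m:=m)) (delta S)%:E <=
     (4/3 * (k%:R * qbound R m))%:E)%E.
Proof.
move=> m_gt0 clique; have [A HA] := good_events m_gt0.
apply: esum_le_seq => s us rs.
pose c S := Num.max (delta S) 0.
have cE S : S \in s -> c S = delta S by move/rs/clique.1 => d0; rewrite /c max_l.
have avg : (\sum_(S <- s) (c S)%:E * P (A S) <= (k%:R * qbound R m)%:E)%E.
  apply: sum_measure_le => [S|S|w]; first by rewrite le_max lexx orbT.
    exact: (HA S).1.
  rewrite (eq_big_seq (fun S => delta S * \1_(A S) w)) => [|S Ss]; last by rewrite cE.
  apply: good_mass_pointwise => // S Ss; exact: ((HA S).2 (rs S Ss)).1.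
have lower : ((3/4 * \sum_(S <- s) delta S)%:E <=
    \sum_(S <- s) (c S)%:E * P (A S))%E.
  rewrite mulr_sumr -sumEFin !big_seq; apply: lee_sum => S Ss.
  rewrite cE // EFinM muleC; apply: lee_wpmul2l.
    by rewrite lee_fin; exact: clique.1 (rs S Ss).
  exact: ((HA S).2 (rs S Ss)).2.
by have := le_trans lower avg; rewrite lee_fin; lra.
Qed.

End Representation.

Theorem mainTheorem16 (R : realType) (X : countType) (H : set (X -> bool)) :
  RepDim_finite R H -> CDstar_finite R H.
Proof.
move=> [k [d [Om [P [C represents]]]]].
exists (7 * k ^ 4)%N => m omega_eq; rewrite leqNgt; apply/negP => large.
have m_gt0 : (0 < m)%N by apply: leq_ltn_trans large.
have omega_le : (omega_star R H m <= (4/3 * (k%:R * qbound R m))%:E)%E.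
  apply: ge_ereal_sup => _ [delta clique <-].
  exact: (clique_mass_le represents m_gt0 clique).
have := clique_bound_lt_pow2 R large.
by rewrite ltNge natrX -lee_fin -omega_eq omega_le.
Qed.
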